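(* Let $(X,\tau)$ be a $T_0$ space and $\mathcal{F}$ a directed family of nonempty finite subsets of $X$. If $x\in U\in\tau_{SI_2}(X)$ and $\bigcap_{F\in\mathcal{F}}\uparrow F\subseteq\uparrow x$, then $F\subseteq U$ for some $F\in\mathcal{F}$.
   Context: For a $T_0$ space $(X,\tau)$, the specialization order is $y\le x$ iff $y\in\operatorname{cl}(\{x\})$; all order notions refer to it. For $A\subseteq X$: $\uparrow A=\{x: a\le x \text{ for some } a\in A\}$, $A^{\uparrow}$ is the set of upper bounds of $A$, $A^{\downarrow}$ the set of lower bounds, and $A^{\delta}=(A^{\uparrow})^{\downarrow}$. A nonempty $E\subseteq X$ is irreducible if whenever $E\subseteq B\cup C$ with $B,C$ closed, then $E\subseteq B$ or $E\subseteq C$. A nonempty family $\mathcal{G}$ of subsets of $X$ is directed if for $G_1,G_2\in\mathcal{G}$ there is $G\in\mathcal{G}$ with $G\subseteq\uparrow G_1\cap\uparrow G_2$. A set $U\subseteq X$ is weakly irreducibly open if $U\in\tau$ and for every irreducible $E\subseteq X$, $E^{\delta}\cap U\neq\emptyset$ implies $E\cap U\neq\emptyset$; these form the topology $\tau_{SI_2}(X)$. *)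

From HB Require Import structures.
From mathcomp Require Import all_boot all_order.
From mathcomp Require Import all_classical all_reals all_analysis.
Set Implicit Arguments. Unset Strict Implicit. Unset Printing Implicit Defensive.
Local Open Scope classical_set_scope.

Section SpecOrder.
Variable T : topologicalType.

(* specialization order: spec_le y x  <->  y <= x  <->  y \in cl {x} *)
Definition spec_le (y x : T) : Prop := closure [set x] y.

Definition upset (A : set T) : set T := [set x | exists2 a, A a & spec_le a x].
Definition ubounds (A : set T) : set T := [set x | forall a, A a -> spec_le a x].
Definition lbounds (A : set T) : set T := [set x | forall a, A a -> spec_le x a].
Definition delta (A : set T) : set T := lbounds (ubounds A).

Definition irreducible (E : set T) : Prop :=
  E !=set0 /\
  forall B C : set T, closed B -> closed C -> E `<=` B `|` C -> E `<=` B \/ E `<=` C.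

Definition directed_family (G : set (set T)) : Prop :=
  G !=set0 /\
  forall G1 G2, G G1 -> G G2 -> exists2 G3, G G3 & G3 `<=` upset G1 `&` upset G2.

(* members of tau_{SI_2}(X) *)
Definition weakly_irreducibly_open (U : set T) : Prop :=
  open U /\
  forall E : set T, irreducible E -> delta E `&` U !=set0 -> E `&` U !=set0.

End SpecOrder.

(** If no member of [F] lies in [U], every member meets the closed set
    [~` U].  Since the members of [F] are finite, meeting every member of [F]
    survives intersections of chains of closed sets, so by Zorn's lemma there
    is a minimal closed [A] inside [~` U] meeting every member of [F].
    Directedness of [F] makes [A] irreducible, and every upper bound of [A]
    lies in each [upset G], hence above [x]; so [x] is in [delta A `&` U],
    and weak irreducible openness forces [A] to meet [U], a contradiction. *)

From HB Require Import structures.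
From mathcomp Require Import all_boot all_order.
From mathcomp Require Import all_classical all_reals all_analysis.
Local Open Scope classical_set_scope.

Definition hits {T : Type} (F : set (set T)) (A : set T) : Prop :=
  forall G, F G -> G `&` A !=set0.

Lemma finite_subset_bigcup_chain {T : choiceType} {C : set (set T)} {G : set T} :
  finite_set G -> G !=set0 -> total_on C subset ->
  G `<=` \bigcup_(V in C) V -> exists2 V, C V & G `<=` V.
Proof.
move=> /finite_seqP[s ->] [g sg] totC sC.
have [V0 CV0 _] := sC g sg.
elim: s sC {g sg} => [|a s IHs] sC; first by exists V0.
have [V1 CV1 sV1] : exists2 V, C V & [set` s] `<=` V.
  by apply: IHs => y sy; apply: sC; rewrite /= in_cons sy orbT.
have [V2 CV2 V2a] := sC a (mem_head a s).
have aV2sV1 : [set` a :: s] `<=` V2 `|` V1.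
  by move=> y /=; rewrite in_cons => /orP[/eqP->|/sV1]; [left|right].
have [V12|V21] := totC _ _ CV1 CV2.
- by exists V2 => // y /aV2sV1[|/V12].
- by exists V1 => // y /aV2sV1[/V21|].
Qed.

Section SpecializationOrder.
Context {T : topologicalType}.
Implicit Types (A B C D G : set T) (F : set (set T)).

Lemma closed_spec_le D (a b : T) : closed D -> D a -> spec_le b a -> D b.
Proof.
move=> cD Da ba; rewrite (closure_id D).1 //.
by apply: (closureS _ ba) => y ->.
Qed.

Lemma closed_meets_upset D G : closed D -> upset G `&` D !=set0 -> G `&` D !=set0.
Proof.
by move=> cD [y [[g Gg gy] Dy]]; exists g; split => //; apply: closed_spec_le gy.
Qed.

Lemma ubounds_sub_bigcap_upset {F A} : hits F A -> ubounds A `<=` \bigcap_(G in F) upset G.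
Proof. by move=> hA u uA G FG; have [g [Gg Ag]] := hA G FG; exists g => //; apply: uA. Qed.

Lemma exists_minimal_closed_hitting {F C} :
  (forall G, F G -> finite_set G) -> closed C -> hits F C ->
  exists A, [/\ closed A, A `<=` C, hits F A &
    forall B, closed B -> hits F (A `&` B) -> A `<=` B].
Proof.
move=> finF cC hC.
pose P V := closed (C `&` ~` V) /\ hits F (C `&` ~` V).
have [V [[cA hA] maxV]] : exists V, P V /\ forall W, V `<` W -> ~ P W.
  apply: Zorn_bigcup => Ch ChP totCh; split.
    have -> : C `&` ~` (\bigcup_(V in Ch) V) = C `&` \bigcap_(V in Ch) (C `&` ~` V).
      rewrite setC_bigcup; apply/seteqP; split=> y [Cy Wy]; split=> // V ChV.
        by split => //; apply: Wy.
      by have [] := Wy V ChV.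
    by apply: closedI => //; apply: closed_bigI => V ChV; exact: (ChP V ChV).1.
  move=> G FG; apply: contrapT => hGW.
  have GCW : G `&` C `<=` \bigcup_(V in Ch) V.
    by move=> y [Gy Cy]; apply: contrapT => Wy; apply: hGW; exists y.
  have [V ChV GCV] := finite_subset_bigcup_chain (finite_setIl C (finF G FG))
    (hC G FG) totCh GCW.
  by have [y [Gy [Cy /(_ (GCV y (conj Gy Cy)))]]] := (ChP V ChV).2 G FG.
exists (C `&` ~` V); split=> // B cB hAB.
have PVB : P (V `|` ~` B).
  by rewrite /P setCU setCK setIA; split => //; apply: closedI.
have VBV : V `|` ~` B `<=` V.
  by apply: contrapT => nVBV; apply: (maxV (V `|` ~` B)) => //; split => // y; left.
by move=> y [Cy nVy]; apply: contrapT => nBy; apply: nVy; apply: VBV; right.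
Qed.

Lemma minimal_closed_hitting_irreducible {F A} :
  directed_family F -> closed A -> hits F A ->
  (forall B, closed B -> hits F (A `&` B) -> A `<=` B) -> irreducible A.
Proof.
move=> [[G0 FG0] dirF] cA hA minA; split.
  by have [a [_ Aa]] := hA G0 FG0; exists a.
move=> B C cB cC ABC; apply: contrapT => /not_orP[nAB nAC].
have missing D : closed D -> ~ A `<=` D -> exists2 G, F G & ~ (G `&` (A `&` D) !=set0).
  move=> cD nAD; apply: contrapT => hD; apply: nAD; apply: minA => // G FG.
  by apply: contrapT => nG; apply: hD; exists G.
have [G1 FG1 nG1] := missing B cB nAB.
have [G2 FG2 nG2] := missing C cC nAC.
have [G3 FG3 G3up] := dirF G1 G2 FG1 FG2.
have [a [G3a Aa]] := hA G3 FG3.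
have [up1 up2] := G3up a G3a.
case: (ABC a Aa) => [Ba|Ca].
- by apply/nG1/closed_meets_upset; [apply: closedI|exists a].
- by apply/nG2/closed_meets_upset; [apply: closedI|exists a].
Qed.

End SpecializationOrder.

(* [hT0] is unused: the argument only needs the specialization preorder. *)
Theorem proposition4p1 (T : topologicalType) (hT0 : kolmogorov_space T)
    (F : set (set T)) (x : T) (U : set T) :
  directed_family F ->
  (forall G, F G -> G !=set0 /\ finite_set G) ->
  U x -> weakly_irreducibly_open U ->
  \bigcap_(G in F) upset G `<=` upset [set x] ->
  exists2 G, F G & G `<=` U.
Proof.
move=> dirF finF Ux [oU wU] capF; apply: contrapT => noG.
have hitsCU : hits F (~` U).
  move=> G FG; apply: contrapT => nG; apply: noG; exists G => // g Gg.
  by apply: contrapT => nUg; apply: nG; exists g.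
have [A [cA AU hA minA]] := exists_minimal_closed_hitting
  (fun G FG => (finF G FG).2) (open_closedC oU) hitsCU.
have irrA := minimal_closed_hitting_irreducible dirF cA hA minA.
have deltaAx : delta A x.
  by move=> u /(ubounds_sub_bigcap_upset hA)/capF[_ -> ].
have [y [Ay Uy]] : A `&` U !=set0 by apply: wU => //; exists x.
exact: AU y Ay Uy.
Qed.
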